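(* Let $\bar R_m(\varepsilon)$ be defined by $\bar R_1(\varepsilon)=\varepsilon$ and, for $m\ge2$, $\big[(-1)^m(1+\varepsilon)^m+(1+\varepsilon)\big]\bar R_m(\varepsilon)=-(3+\varepsilon)\sum_{j=1}^{m-1}\bar R_j(\varepsilon)\bar R_{m-j}(\varepsilon)$. Write the expansions at $\varepsilon=0$ as $$\bar R_{2m+1}(\varepsilon)=\varepsilon^{m+1}\big(a_m+b_m\varepsilon+O(\varepsilon^2)\big)\ (m\ge0),\qquad \bar R_{2n}(\varepsilon)=\varepsilon^{n+1}\big(c_n+d_n\varepsilon+O(\varepsilon^2)\big)\ (n\ge1).$$ Then, for $|\tau|<1/3$, $$\sum_{m\ge0}b_m\tau^{2m+1}=-\frac{\tau\big(45\tau^2-33\log(1+9\tau^2)\big)}{24\,(1+9\tau^2)^{3/2}},\qquad \sum_{n\ge1}d_n\tau^{2n}=\frac{\tau^2\big(14+36\tau^2-33\log(1+9\tau^2)\big)}{8\,(1+9\tau^2)^2}.$$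
   Context: The $\bar R_m$ are the coefficient functions of the transseries solution of the static logistic map $y(n+1)=(3+\varepsilon)y(n)(1-y(n))$ about its fixed point $(2+\varepsilon)/(3+\varepsilon)$, normalised by $\bar R_1=\varepsilon$; each $\bar R_m$ is a rational function of $\varepsilon$ analytic at $0$ with the stated orders of vanishing. $\log$ denotes the real natural logarithm. *)

From Stdlib Require Import Reals Arith.
From Coquelicot Require Import Coquelicot.
Open Scope R_scope.

Definition Dden (m : nat) (e : R) : R := (-1) ^ m * (1 + e) ^ m + (1 + e).

(* Rtab n e k = Rbar_k(e) for 1 <= k <= n+1 (computed by the recursion). *)
Fixpoint Rtab (n : nat) (e : R) : nat -> R :=
  match n with
  | O => fun _ => e
  | S n' =>
      let f := Rtab n' e in
      let m := (n' + 2)%nat in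
      fun k =>
        if Nat.eqb k m then
          - (3 + e) * sum_f_R0 (fun i => f (i + 1)%nat * f (m - 1 - i)%nat) (m - 2)
            / Dden m e
        else f k
  end.

(* RbarL m e, for m >= 1 and eps with Dden k eps <> 0 for 2 <= k <= m
   (e.g. 0 < |eps| < 1):  RbarL 1 e = e and
   Dden m e * RbarL m e = -(3+e) * sum_{j=1}^{m-1} RbarL j e * RbarL (m-j) e. *)
Definition RbarL (m : nat) (e : R) : R := Rtab (m - 1) e m.

Definition expansion2 (f : R -> R) (k : nat) (a b : R) : Prop :=
  exists C delta : R, 0 < delta /\
    forall e : R, 0 < Rabs e < delta ->
      Rabs (f e - e ^ k * (a + b * e)) <= C * Rabs e ^ (k + 2).

From Stdlib Require Import Reals Lra Lia Psatz.
From Coquelicot Require Import Coquelicot.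
Open Scope R_scope.

(* We prove R_j(e) = e^(j/2 + 1) * (alpha_j + beta_j e + O(e^2)) (integer division j/2), where
   alpha_j, beta_j are given by sequences A, B supported on odd j and C, D supported on even j.
   1. Local expansions ("jets") f(e) = e^k (a + b e + e^2 h(e)), h bounded near 0, are closed
      under sums, products and quotients; the denominators Dden m have explicit jets.
   2. Feeding the jets into Dden m * R_m = -(3+e) * sum_j R_j R_(m-j) shows, by strong
      induction, that all R_j have the expected jets as soon as A, B, C, D satisfy two
      coefficient identities (Section LocalExpansions).
   3. These identities are checked on generating functions: for A(t) = t/sqrt(1+9t^2),
      C(t) = -3t^2/(2(1+9t^2)) and explicit B, D involving ln(1+9t^2) they become differential
      identities such as A - tA' + 2C + 3(A^2 + 2AC) = 0, verified by computation, and
      uniqueness of power series coefficients transfers them back to the coefficients.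
   4. The series of the b_m and d_n are these generating functions evaluated at tau^2, which
      yields the closed forms of the theorem. *)

Definition bounded_near0 (h : R -> R) : Prop :=
  exists C : R, locally' 0 (fun e => Rabs (h e) <= C).

Lemma near0_small (r : R) : 0 < r -> locally' 0 (fun e => Rabs e < r).
Proof.
  intros Hr. apply filter_le_within. exists (mkposreal r Hr). intros e He.
  change (Rabs (e - 0) < r) in He. now rewrite Rminus_0_r in He.
Qed.

Lemma near0_delta (P : R -> Prop) : locally' 0 P ->
  exists delta, 0 < delta /\ forall e, 0 < Rabs e < delta -> P e.
Proof.
  intros [[d Hd] H]. exists d. split; [exact Hd|]. intros e [He0 Hed].
  apply H.
  - change (Rabs (e - 0) < d). now rewrite Rminus_0_r.
  - intros ->. rewrite Rabs_R0 in He0. lra.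
Qed.

Lemma near0_nonzero : locally' 0 (fun e : R => e <> 0).
Proof. exact (filter_forall _ (fun e H => H)). Qed.

Lemma bounded_near0_const (c : R) : bounded_near0 (fun _ => c).
Proof. exists (Rabs c). apply filter_forall. intros _. lra. Qed.

Lemma bounded_near0_id : bounded_near0 (fun e => e).
Proof. exists 1. generalize (near0_small 1 Rlt_0_1). apply filter_imp. intros; lra. Qed.

Lemma bounded_near0_plus (f g : R -> R) :
  bounded_near0 f -> bounded_near0 g -> bounded_near0 (fun e => f e + g e).
Proof.
  intros [C1 H1] [C2 H2]. exists (C1 + C2).
  generalize (filter_and _ _ H1 H2). apply filter_imp. intros e [Hf Hg].
  eapply Rle_trans; [apply Rabs_triang | lra].
Qed.

Lemma bounded_near0_mult (f g : R -> R) :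
  bounded_near0 f -> bounded_near0 g -> bounded_near0 (fun e => f e * g e).
Proof.
  intros [C1 H1] [C2 H2]. exists (C1 * C2).
  generalize (filter_and _ _ H1 H2). apply filter_imp. intros e [Hf Hg].
  rewrite Rabs_mult. apply Rmult_le_compat; auto using Rabs_pos.
Qed.

Lemma bounded_near0_opp (f : R -> R) :
  bounded_near0 f -> bounded_near0 (fun e => - f e).
Proof. intros [C H]. exists C. revert H. apply filter_imp. intros e. now rewrite Rabs_Ropp. Qed.

Lemma bounded_near0_pow (n : nat) : bounded_near0 (fun e => e ^ n).
Proof.
  induction n as [|n IH]; [simpl; apply bounded_near0_const|].
  apply (bounded_near0_mult (fun e => e) (fun e => e ^ n)); [apply bounded_near0_id | exact IH].
Qed.

Ltac bounded_near0_tac :=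
  unfold Rminus, Rdiv;
  repeat first
    [ apply bounded_near0_plus | apply bounded_near0_mult | apply bounded_near0_opp
    | apply bounded_near0_pow | apply bounded_near0_id | apply bounded_near0_const
    | assumption ].

Lemma bounded_near0_inv (g : R -> R) (d : R) : bounded_near0 g -> d <> 0 ->
  locally' 0 (fun e => d + e * g e <> 0) /\ bounded_near0 (fun e => / (d + e * g e)).
Proof.
  intros [C HC] Hd.
  assert (Hd0 : 0 < Rabs d) by now apply Rabs_pos_lt.
  set (r := Rabs d / (2 * (Rabs C + 1))).
  assert (Hr : 0 < r) by (unfold r; apply Rdiv_lt_0_compat; [lra | pose proof (Rabs_pos C); lra]).
  assert (Hfar : locally' 0 (fun e => Rabs d / 2 <= Rabs (d + e * g e))).
  { generalize (filter_and _ _ HC (near0_small r Hr)). apply filter_imp. intros e [Hg He].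
    assert (Hsmall : Rabs (e * g e) <= Rabs d / 2).
    { rewrite Rabs_mult. assert (HC' : Rabs (g e) <= Rabs C + 1) by (pose proof (Rle_abs C); lra).
      assert (Hre : r * (2 * (Rabs C + 1)) = Rabs d)
        by (unfold r; field; pose proof (Rabs_pos C); lra).
      pose proof (Rabs_pos e). pose proof (Rabs_pos (g e)). nra. }
    pose proof (Rabs_triang (d + e * g e) (- (e * g e))) as Htri.
    rewrite Rabs_Ropp in Htri. replace (d + e * g e + - (e * g e)) with d in Htri by ring. lra. }
  split.
  - revert Hfar. apply filter_imp. intros e He Hz. rewrite Hz, Rabs_R0 in He. lra.
  - exists (2 / Rabs d). revert Hfar. apply filter_imp. intros e He.
    rewrite Rabs_inv. replace (2 / Rabs d) with (/ (Rabs d / 2)) by (field; lra).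
    apply Rinv_le_contravar; lra.
Qed.

Definition jet (f : R -> R) (k : nat) (a b : R) : Prop :=
  exists h : R -> R, bounded_near0 h /\
    locally' 0 (fun e => f e = e ^ k * (a + b * e + e ^ 2 * h e)).

Lemma jet_expansion2 (f : R -> R) (k : nat) (a b : R) : jet f k a b -> expansion2 f k a b.
Proof.
  intros [h [[C HC] Hf]].
  destruct (near0_delta _ (filter_and _ _ HC Hf)) as [delta [Hdelta H]].
  exists C, delta. split; [exact Hdelta|]. intros e He. destruct (H e He) as [Hh ->].
  replace (e ^ k * (a + b * e + e ^ 2 * h e) - e ^ k * (a + b * e)) with (h e * e ^ (k + 2))
    by (rewrite pow_add; ring).
  rewrite Rabs_mult, <- RPow_abs. apply Rmult_le_compat_r; [apply pow_le, Rabs_pos | exact Hh].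
Qed.

Lemma jet_ext (f g : R -> R) (k : nat) (a b : R) :
  (forall e, f e = g e) -> jet g k a b -> jet f k a b.
Proof.
  intros Efg [h [Hh Hg]]. exists h. split; [exact Hh|].
  revert Hg. apply filter_imp. intros e He. now rewrite Efg.
Qed.

Lemma jet_eq (f : R -> R) (k k' : nat) (a a' b b' : R) :
  k = k' -> a = a' -> b = b' -> jet f k a b -> jet f k' a' b'.
Proof. now intros -> -> ->. Qed.

Lemma jet_poly (f : R -> R) (k : nat) (a b : R) :
  (forall e, f e = e ^ k * (a + b * e)) -> jet f k a b.
Proof.
  intros Ef. exists (fun _ => 0). split; [apply bounded_near0_const|].
  apply filter_forall. intros e. rewrite Ef. ring.
Qed.

Lemma jet_add (f g : R -> R) (k : nat) (a b c d : R) :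
  jet f k a b -> jet g k c d -> jet (fun e => f e + g e) k (a + c) (b + d).
Proof.
  intros [h1 [Hh1 Hf]] [h2 [Hh2 Hg]]. exists (fun e => h1 e + h2 e).
  split; [bounded_near0_tac|].
  generalize (filter_and _ _ Hf Hg). apply filter_imp. intros e [-> ->]. ring.
Qed.

Lemma jet_mul (f g : R -> R) (k l : nat) (a b c d : R) :
  jet f k a b -> jet g l c d ->
  jet (fun e => f e * g e) (k + l) (a * c) (a * d + b * c).
Proof.
  intros [h1 [Hh1 Hf]] [h2 [Hh2 Hg]].
  exists (fun e => b * d + (a + b * e) * h2 e + h1 e * (c + d * e) + e ^ 2 * h1 e * h2 e).
  split; [bounded_near0_tac|].
  generalize (filter_and _ _ Hf Hg). apply filter_imp. intros e [-> ->].
  rewrite pow_add. ring.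
Qed.

Lemma jet_sum (F : nat -> R -> R) (a b : nat -> R) (k n : nat) :
  (forall i, (i <= n)%nat -> jet (F i) k (a i) (b i)) ->
  jet (fun e => sum_f_R0 (fun i => F i e) n) k (sum_f_R0 a n) (sum_f_R0 b n).
Proof.
  induction n as [|n IH]; intros H; simpl.
  - apply H. lia.
  - apply (jet_add (fun e => sum_f_R0 (fun i => F i e) n) (F (S n))).
    + apply IH. intros i Hi. apply H. lia.
    + apply H. lia.
Qed.

Lemma jet_shift (f : R -> R) (k : nat) (a b : R) : jet f (S k) a b -> jet f k 0 a.
Proof.
  intros [h [Hh Hf]]. exists (fun e => b + e * h e). split; [bounded_near0_tac|].
  revert Hf. apply filter_imp. intros e ->. simpl. ring.
Qed.

Lemma jet_div (N D : R -> R) (k j : nat) (n0 n1 d0 d1 : R) :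
  jet N (k + j) n0 n1 -> jet D j d0 d1 -> d0 <> 0 ->
  jet (fun e => N e / D e) k (n0 / d0) ((n1 * d0 - n0 * d1) / (d0 * d0)).
Proof.
  intros [h1 [Hh1 HN]] [h2 [Hh2 HD]] Hd0.
  set (p := n0 / d0). set (q := (n1 * d0 - n0 * d1) / (d0 * d0)).
  destruct (bounded_near0_inv (fun e => d1 + e * h2 e) d0) as [Hv Hinv];
    [bounded_near0_tac | exact Hd0 |].
  exists (fun e => (h1 e - p * h2 e - q * d1 - q * h2 e * e) * / (d0 + e * (d1 + e * h2 e))).
  split; [bounded_near0_tac|].
  generalize (filter_and _ _ (filter_and _ _ HN HD) (filter_and _ _ Hv near0_nonzero)).
  apply filter_imp. intros e [[-> ->] [Hve He]].
  assert (Hej : e ^ j <> 0) by now apply pow_nonzero.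
  rewrite pow_add. unfold p, q. field_simplify_eq; [ring | auto].
Qed.

Lemma pow_one_plus_expansion (n : nat) : exists h : R -> R, bounded_near0 h /\
  forall e, (1 + e) ^ n = 1 + INR n * e + INR n * (INR n - 1) / 2 * e ^ 2 + e ^ 3 * h e.
Proof.
  induction n as [|n [h [Hh Eh]]].
  - exists (fun _ => 0). split; [apply bounded_near0_const|]. intros e. simpl. field.
  - exists (fun e => INR n * (INR n - 1) / 2 + (1 + e) * h e). split; [bounded_near0_tac|].
    intros e. rewrite <- tech_pow_Rmult, Eh, S_INR. field.
Qed.

Lemma jet_Dden_even (M : nat) : Nat.Even M -> jet (Dden M) 0 2 (INR M + 1).
Proof.
  intros [p ->]. destruct (pow_one_plus_expansion (2 * p)) as [h [Hh Eh]].
  exists (fun e => INR (2 * p) * (INR (2 * p) - 1) / 2 + e * h e). split; [bounded_near0_tac|].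
  apply filter_forall. intros e. unfold Dden. rewrite pow_1_even, Eh. simpl. ring.
Qed.

Lemma jet_Dden_odd (M : nat) : Nat.Odd M ->
  jet (Dden M) 1 (1 - INR M) (- (INR M * (INR M - 1) / 2)).
Proof.
  intros [p ->]. rewrite Nat.add_1_r.
  destruct (pow_one_plus_expansion (S (2 * p))) as [h [Hh Eh]].
  exists (fun e => - h e). split; [bounded_near0_tac|].
  apply filter_forall. intros e. unfold Dden. rewrite pow_1_odd, Eh. simpl. ring.
Qed.

(* Unfolding the table defining RbarL: entries never change once computed, hence the
   recursion holds for RbarL itself. *)
Lemma Rtab_stable (e : R) (n k : nat) : (1 <= k <= n + 1)%nat -> Rtab n e k = RbarL k e.
Proof.
  induction n as [|n IH]; intros Hk.
  - now replace k with 1%nat by lia.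
  - destruct (Nat.eq_dec k (S n + 1)) as [->|Hne].
    + unfold RbarL. now replace (S n + 1 - 1)%nat with (S n) by lia.
    + cbn [Rtab]. replace (Nat.eqb k (n + 2)) with false by (symmetry; apply Nat.eqb_neq; lia).
      apply IH. lia.
Qed.

Lemma RbarL_rec (n : nat) (e : R) : RbarL (S (S n)) e =
  - (3 + e) * sum_f_R0 (fun i => RbarL (i + 1) e * RbarL (S n - i) e) n / Dden (S (S n)) e.
Proof.
  unfold RbarL at 1. replace (S (S n) - 1)%nat with (S n) by lia.
  cbn [Rtab]. replace (Nat.eqb (S (S n)) (n + 2)) with true by (symmetry; apply Nat.eqb_eq; lia).
  replace (n + 2 - 2)%nat with n by lia.
  do 2 f_equal; [apply sum_eq; intros i Hi | lia].
  rewrite !Rtab_stable by lia. now replace (n + 2 - 1 - i)%nat with (S n - i)%nat by lia.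
Qed.

Lemma PS_mult_inner (u v : nat -> R) (n : nat) : u 0%nat = 0 -> v 0%nat = 0 ->
  PS_mult u v (S (S n)) = sum_f_R0 (fun i => u (i + 1)%nat * v (S n - i)%nat) n.
Proof.
  intros Hu Hv. unfold PS_mult. rewrite decomp_sum by lia. rewrite Hu, Rmult_0_l, Rplus_0_l.
  simpl Nat.pred. rewrite tech5. replace (S (S n) - S (S n))%nat with 0%nat by lia.
  rewrite Hv, Rmult_0_r, Rplus_0_r. apply sum_eq. intros i Hi. do 2 f_equal; lia.
Qed.

(* Cauchy products giving the leading and next-to-leading coefficients of sum_j R_j R_(m-j). *)
Definition conv0 (A C : nat -> R) (M : nat) : R :=
  PS_mult A A M + PS_mult A C M + PS_mult C A M.

Definition conv1 (A B C D : nat -> R) (M : nat) : R :=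
  PS_mult A B M + PS_mult B A M + PS_mult A D M + PS_mult D A M
  + PS_mult B C M + PS_mult C B M + PS_mult C C M.

(* Coefficient sequences indexed by the total index j: A, B (resp. C, D) are the leading and
   next coefficients for odd (resp. even) j; the two identities are what the recursion forces. *)
Section LocalExpansions.

Variables A B C D : nat -> R.

Hypothesis A_even : forall p, A (2 * p)%nat = 0.
Hypothesis B_even : forall p, B (2 * p)%nat = 0.
Hypothesis C_odd : forall p, C (S (2 * p)) = 0.
Hypothesis D_odd : forall p, D (S (2 * p)) = 0.
Hypothesis C_0 : C 0%nat = 0.
Hypothesis D_0 : D 0%nat = 0.
Hypothesis A_1 : A 1%nat = 1.
Hypothesis B_1 : B 1%nat = 0.

Hypothesis lead_identity : forall M,
  (1 - INR M) * A M + 2 * C M + 3 * conv0 A C M = 0.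
Hypothesis next_identity : forall M,
  (1 - INR M) * B M + 2 * D M + conv0 A C M + 3 * conv1 A B C D M
  - INR M * (INR M - 1) / 2 * A M + (INR M + 1) * C M = 0.

Definition expansion_of (j : nat) : Prop :=
  jet (RbarL j) (Nat.div2 j + 1) (A j + C j) (B j + D j).

Lemma expansion_of_odd (p : nat) :
  expansion_of (S (2 * p)) <-> jet (RbarL (S (2 * p))) (p + 1) (A (S (2 * p))) (B (S (2 * p))).
Proof. unfold expansion_of. now rewrite Nat.div2_succ_double, C_odd, D_odd, !Rplus_0_r. Qed.

Lemma expansion_of_even (p : nat) :
  expansion_of (2 * p) <-> jet (RbarL (2 * p)) (p + 1) (C (2 * p)) (D (2 * p)).
Proof. unfold expansion_of. now rewrite Nat.div2_double, A_even, B_even, !Rplus_0_l. Qed.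

Definition term0 (j k : nat) : R := A j * A k + A j * C k + C j * A k.
Definition term1 (j k : nat) : R := A j * B k + B j * A k + A j * D k + D j * A k
  + B j * C k + C j * B k + C j * C k.

(* Jet of R_j * R_k; when j and k are both even the product vanishes to one more order. *)
Lemma product_expansion (j k : nat) : expansion_of j -> expansion_of k ->
  jet (fun e => RbarL j e * RbarL k e) (Nat.div2 (j + k + 1) + 1) (term0 j k) (term1 j k).
Proof.
  intros Ej Ek. unfold term0, term1.
  destruct (Nat.Even_or_Odd j) as [[p ->]|[p ->]];
  destruct (Nat.Even_or_Odd k) as [[q ->]|[q ->]];
  rewrite ?Nat.add_1_r in *; rewrite ?A_even, ?B_even, ?C_odd, ?D_odd.
  - apply expansion_of_even in Ej, Ek.
    replace (S (2 * p + 2 * q)) with (S (2 * (p + q))) by lia. rewrite Nat.div2_succ_double.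
    pose proof (jet_mul _ _ _ _ _ _ _ _ Ej Ek) as Hprod.
    replace (p + 1 + (q + 1))%nat with (S (S (p + q))) in Hprod by lia.
    eapply jet_eq; [| | |exact (jet_shift _ _ _ _ Hprod)]; [lia|ring|ring].
  - apply expansion_of_even in Ej. apply expansion_of_odd in Ek.
    replace (S (2 * p + S (2 * q))) with (2 * (p + q + 1))%nat by lia. rewrite Nat.div2_double.
    eapply jet_eq; [| | |exact (jet_mul _ _ _ _ _ _ _ _ Ej Ek)]; [lia|ring|ring].
  - apply expansion_of_odd in Ej. apply expansion_of_even in Ek.
    replace (S (S (2 * p) + 2 * q)) with (2 * (p + q + 1))%nat by lia. rewrite Nat.div2_double.
    eapply jet_eq; [| | |exact (jet_mul _ _ _ _ _ _ _ _ Ej Ek)]; [lia|ring|ring].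
  - apply expansion_of_odd in Ej, Ek.
    replace (S (S (2 * p) + S (2 * q))) with (S (2 * (p + q + 1))) by lia.
    rewrite Nat.div2_succ_double.
    eapply jet_eq; [| | |exact (jet_mul _ _ _ _ _ _ _ _ Ej Ek)]; [lia|ring|ring].
Qed.

Lemma conv0_as_sum (n : nat) :
  conv0 A C (S (S n)) = sum_f_R0 (fun i => term0 (i + 1) (S n - i)) n.
Proof.
  unfold conv0, term0. rewrite !PS_mult_inner by (exact (A_even 0) || exact C_0).
  rewrite <- !plus_sum. apply sum_eq. intros; ring.
Qed.

Lemma conv1_as_sum (n : nat) :
  conv1 A B C D (S (S n)) = sum_f_R0 (fun i => term1 (i + 1) (S n - i)) n.
Proof.
  unfold conv1, term1.
  rewrite !PS_mult_inner by (exact (A_even 0) || exact (B_even 0) || exact C_0 || exact D_0).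
  rewrite <- !plus_sum. apply sum_eq. intros; ring.
Qed.

Lemma numerator_expansion (n : nat) :
  (forall j, (1 <= j <= S n)%nat -> expansion_of j) ->
  jet (fun e => - (3 + e) * sum_f_R0 (fun i => RbarL (i + 1) e * RbarL (S n - i) e) n)
    (Nat.div2 (S (S n) + 1) + 1)
    (-3 * conv0 A C (S (S n))) (- conv0 A C (S (S n)) - 3 * conv1 A B C D (S (S n))).
Proof.
  intros IH.
  assert (Hsum : jet (fun e => sum_f_R0 (fun i => RbarL (i + 1) e * RbarL (S n - i) e) n)
      (Nat.div2 (S (S n) + 1) + 1) (conv0 A C (S (S n))) (conv1 A B C D (S (S n)))).
  { rewrite conv0_as_sum, conv1_as_sum.
    apply (jet_sum (fun i e => RbarL (i + 1) e * RbarL (S n - i) e)). intros i Hi.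
    replace (S (S n) + 1)%nat with (i + 1 + (S n - i) + 1)%nat by lia.
    apply product_expansion; apply IH; lia. }
  assert (Hfactor : jet (fun e => - (3 + e)) 0 (-3) (-1)) by (apply jet_poly; intros; simpl; ring).
  eapply jet_eq; [| | |exact (jet_mul _ _ _ _ _ _ _ _ Hfactor Hsum)]; [lia|ring|ring].
Qed.

(* Dividing the numerator by the denominator gives the claimed jet; the two coefficient
   identities are exactly what is needed here (even and odd m). *)
Lemma quotient_even (M : nat) (N : R -> R) : Nat.Even M ->
  jet N (Nat.div2 (M + 1) + 1) (-3 * conv0 A C M) (- conv0 A C M - 3 * conv1 A B C D M) ->
  jet (fun e => N e / Dden M e) (Nat.div2 M + 1) (A M + C M) (B M + D M).
Proof.
  intros HM HN. pose proof (jet_Dden_even M HM) as HD.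
  pose proof (lead_identity M) as E0. pose proof (next_identity M) as E1.
  destruct HM as [p ->]. rewrite A_even, B_even in *.
  rewrite Nat.div2_double.
  replace (Nat.div2 (2 * p + 1) + 1)%nat with (p + 1 + 0)%nat in HN
    by (replace (2 * p + 1)%nat with (S (2 * p)) by lia; rewrite Nat.div2_succ_double; lia).
  pose proof (jet_div _ _ _ _ _ _ _ _ HN HD ltac:(discrR)) as H.
  eapply jet_eq; [ | | | exact H].
  - reflexivity.
  - lra.
  - assert (HC : C (2 * p)%nat = -(3/2) * conv0 A C (2 * p)) by lra.
    rewrite HC in E1. lra.
Qed.

Lemma quotient_odd (M : nat) (N : R -> R) : Nat.Odd M -> (1 < M)%nat ->
  jet N (Nat.div2 (M + 1) + 1) (-3 * conv0 A C M) (- conv0 A C M - 3 * conv1 A B C D M) ->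
  jet (fun e => N e / Dden M e) (Nat.div2 M + 1) (A M + C M) (B M + D M).
Proof.
  intros HM HM1 HN. pose proof (jet_Dden_odd M HM) as HD.
  assert (Hd0 : 1 - INR M <> 0) by (apply lt_INR in HM1; simpl in HM1; lra).
  pose proof (lead_identity M) as E0. pose proof (next_identity M) as E1.
  destruct HM as [p ->]. rewrite !Nat.add_1_r in *. rewrite C_odd, D_odd in *.
  replace (S (Nat.div2 (S (S (2 * p))))) with (S p + 1)%nat in HN
    by (replace (S (S (2 * p))) with (2 * S p)%nat by lia; rewrite Nat.div2_double; lia).
  pose proof (jet_div _ _ _ _ _ _ _ _ HN HD Hd0) as H.
  set (m := INR (S (2 * p))) in *.
  set (c0 := conv0 A C (S (2 * p))) in *. set (c1 := conv1 A B C D (S (2 * p))) in *.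
  assert (Hc0 : c0 = - ((1 - m) * A (S (2 * p))) / 3) by lra.
  assert (Hc1 : c1 = - ((1 - m) * B (S (2 * p)) + c0 - m * (m - 1) / 2 * A (S (2 * p))) / 3)
    by lra.
  eapply jet_eq; [ | | | exact H].
  - now rewrite Nat.div2_succ_double.
  - rewrite Hc0. field. exact Hd0.
  - rewrite Hc1, Hc0. field. exact Hd0.
Qed.

Theorem all_expansions (M : nat) : (1 <= M)%nat -> expansion_of M.
Proof.
  induction M as [M IH] using (well_founded_induction Wf_nat.lt_wf). intros HM.
  destruct M as [|[|n]]; [lia | |].
  - apply (expansion_of_odd 0). change (S (2 * 0)) with 1%nat. rewrite A_1, B_1.
    apply jet_poly. intros e. unfold RbarL. simpl. ring.
  - unfold expansion_of.
    apply (jet_ext _ (fun e => - (3 + e) * sum_f_R0 (fun i => RbarL (i + 1) e * RbarL (S n - i) e) n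
                               / Dden (S (S n)) e)); [intros e; apply RbarL_rec|].
    pose proof (numerator_expansion n (fun j Hj => IH j ltac:(lia) ltac:(lia))) as HN.
    destruct (Nat.Even_or_Odd (S (S n))) as [Hev|Hodd].
    + exact (quotient_even _ _ Hev HN).
    + exact (quotient_odd _ _ Hodd ltac:(lia) HN).
Qed.

End LocalExpansions.

Definition pseries_on (r : R) (u : nat -> R) (f : R -> R) : Prop :=
  forall x, Rabs x < r -> is_pseries u x (f x).

Lemma is_pseries_Rmult (u : nat -> R) (x l : R) :
  is_pseries u x l <-> is_series (fun n => u n * x ^ n) l.
Proof.
  split; apply is_series_ext; intros n; rewrite <- pow_n_pow; apply Rmult_comm.
Qed.

Lemma bounded_initial_segment (u : nat -> R) (N : nat) :
  exists K, forall n, (n <= N)%nat -> Rabs (u n) <= K.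
Proof.
  induction N as [|N [K HK]].
  - exists (Rabs (u 0%nat)). intros n Hn. replace n with 0%nat by lia. lra.
  - exists (Rmax K (Rabs (u (S N)))). intros n Hn.
    destruct (Nat.eq_dec n (S N)) as [->|Hne]; [apply Rmax_r|].
    eapply Rle_trans; [apply HK; lia | apply Rmax_l].
Qed.

Lemma bounded_of_lim0 (u : nat -> R) : is_lim_seq u 0 -> exists K, forall n, Rabs (u n) <= K.
Proof.
  intros H. apply is_lim_seq_spec in H. destruct (H (mkposreal 1 Rlt_0_1)) as [N HN].
  destruct (bounded_initial_segment u N) as [K HK].
  exists (Rmax 1 K). intros n. destruct (Nat.le_gt_cases n N) as [Hn|Hn].
  - eapply Rle_trans; [apply HK, Hn | apply Rmax_r].
  - specialize (HN n ltac:(lia)). simpl in HN. rewrite Rminus_0_r in HN.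
    eapply Rle_trans; [left; exact HN | apply Rmax_l].
Qed.

Lemma radius_of_bounded_terms (u : nat -> R) (y K : R) :
  (forall n, Rabs (u n * y ^ n) <= K) -> forall x, Rabs x < y -> Rbar_lt (Rabs x) (CV_radius u).
Proof.
  intros HK x Hx.
  assert (Hy : Rbar_le y (CV_radius u)) by (apply (proj1 (CV_radius_bounded u)); now exists K).
  destruct (CV_radius u) as [c| |]; simpl in *; auto; lra.
Qed.

Lemma pseries_on_radius (r : R) (u : nat -> R) (f : R -> R) :
  pseries_on r u f -> forall x, Rabs x < r -> Rbar_lt (Rabs x) (CV_radius u).
Proof.
  intros Hu x Hx. set (y := (Rabs x + r) / 2).
  assert (Hy : Rabs y < r) by (pose proof (Rabs_pos x); unfold y; rewrite Rabs_right; lra).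
  destruct (bounded_of_lim0 (fun n => u n * y ^ n)) as [K HK].
  { apply ex_series_lim_0. exists (f y). apply is_pseries_Rmult, Hu, Hy. }
  apply (radius_of_bounded_terms u y K HK). unfold y. lra.
Qed.

Lemma pseries_on_unique_zero (r : R) (u : nat -> R) :
  0 < r -> pseries_on r u (fun _ => 0) -> forall n, u n = 0.
Proof.
  intros Hr Hu n.
  assert (Hrad : Rbar_lt 0 (CV_radius u)).
  { rewrite <- Rabs_R0. apply (pseries_on_radius r u _ Hu). now rewrite Rabs_R0. }
  apply (PSeries_ext_recip u (fun _ => 0) n Hrad); [rewrite CV_radius_const_0; exact I|].
  exists (mkposreal r Hr). intros x Hx. rewrite PSeries_const_0.
  apply is_pseries_unique, Hu. change (Rabs (x - 0) < r) in Hx. now rewrite Rminus_0_r in Hx.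
Qed.

Lemma pseries_on_ext (r : R) (u v : nat -> R) (f g : R -> R) :
  (forall n, u n = v n) -> (forall x, Rabs x < r -> f x = g x) ->
  pseries_on r u f -> pseries_on r v g.
Proof.
  intros Huv Hfg Hu x Hx. rewrite <- Hfg by exact Hx.
  apply (is_pseries_ext u); [exact Huv | apply Hu, Hx].
Qed.

Lemma pseries_on_plus (r : R) (u v : nat -> R) (f g : R -> R) :
  pseries_on r u f -> pseries_on r v g -> pseries_on r (fun n => u n + v n) (fun x => f x + g x).
Proof. intros Hu Hv x Hx. exact (is_pseries_plus u v x _ _ (Hu x Hx) (Hv x Hx)). Qed.

Lemma pseries_on_scal (r c : R) (u : nat -> R) (f : R -> R) :
  pseries_on r u f -> pseries_on r (fun n => c * u n) (fun x => c * f x).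
Proof. intros Hu x Hx. exact (is_pseries_scal c u x _ (Rmult_comm _ _) (Hu x Hx)). Qed.

Lemma PS_incr_1_R (u : nat -> R) (n : nat) :
  PS_incr_1 u n = match n with O => 0 | S k => u k end.
Proof. now destruct n. Qed.

Lemma pseries_on_shift (r : R) (u : nat -> R) (f : R -> R) :
  pseries_on r u f -> pseries_on r (PS_incr_1 u) (fun x => x * f x).
Proof. intros Hu x Hx. exact (is_pseries_incr_1 u x _ (Hu x Hx)). Qed.

Lemma pseries_on_mult (r : R) (u v : nat -> R) (f g : R -> R) :
  pseries_on r u f -> pseries_on r v g -> pseries_on r (PS_mult u v) (fun x => f x * g x).
Proof.
  intros Hu Hv x Hx.
  apply is_pseries_mult; [apply Hu, Hx | apply Hv, Hx | |];
    [apply (pseries_on_radius r u f Hu) | apply (pseries_on_radius r v g Hv)]; exact Hx.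
Qed.

Lemma open_disk_nbhd (r x : R) : Rabs x < r -> locally x (fun y => Rabs y < r).
Proof.
  intros Hx. assert (Hd : 0 < r - Rabs x) by lra.
  exists (mkposreal _ Hd). intros y Hy. change R in y. change (Rabs (y - x) < r - Rabs x) in Hy.
  pose proof (Rabs_triang x (y - x)) as Htri. replace (x + (y - x)) with y in Htri by ring. lra.
Qed.

Lemma pseries_on_deriv (r : R) (u : nat -> R) (f df : R -> R) :
  pseries_on r u f -> (forall x, Rabs x < r -> is_derive f x (df x)) ->
  pseries_on r (PS_derive u) df.
Proof.
  intros Hu Hf x Hx.
  replace (df x) with (Derive (PSeries u) x).
  - apply is_pseries_derive, (pseries_on_radius r u f Hu), Hx.
  - rewrite (Derive_ext_loc _ f); [apply is_derive_unique, Hf, Hx|].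
    generalize (open_disk_nbhd r x Hx). apply filter_imp. intros y Hy.
    apply is_pseries_unique, Hu, Hy.
Qed.

Lemma pseries_on_weight (r : R) (u : nat -> R) (f df : R -> R) :
  pseries_on r u f -> (forall x, Rabs x < r -> is_derive f x (df x)) ->
  pseries_on r (fun M => INR M * u M) (fun x => x * df x).
Proof.
  intros Hu Hf. apply (pseries_on_ext r (PS_incr_1 (PS_derive u)) _ (fun x => x * df x));
    [| reflexivity | apply pseries_on_shift, (pseries_on_deriv r u f df Hu Hf)].
  intros [|M]; rewrite PS_incr_1_R; simpl; [ring | reflexivity].
Qed.

Lemma pseries_on_weight2 (r : R) (u : nat -> R) (f df d2f : R -> R) :
  pseries_on r u f -> (forall x, Rabs x < r -> is_derive f x (df x)) ->
  (forall x, Rabs x < r -> is_derive df x (d2f x)) ->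
  pseries_on r (fun M => INR M * (INR M - 1) * u M) (fun x => x ^ 2 * d2f x).
Proof.
  intros Hu Hf Hdf.
  pose proof (pseries_on_deriv r _ _ _ (pseries_on_deriv r u f df Hu Hf) Hdf) as H2.
  apply (pseries_on_ext r (PS_incr_1 (PS_incr_1 (PS_derive (PS_derive u)))) _
    (fun x => x * (x * d2f x)));
    [| intros; ring | now apply pseries_on_shift, pseries_on_shift].
  intros [|[|M]]; rewrite !PS_incr_1_R; [simpl INR; ring | simpl INR; ring |].
  unfold PS_derive. rewrite !S_INR. ring.
Qed.

Lemma is_derive_Rmult (f g : R -> R) (t df dg : R) :
  is_derive f t df -> is_derive g t dg -> is_derive (fun s => f s * g s) t (df * g t + f t * dg).
Proof. intros Hf Hg. apply (is_derive_mult f g t df dg Hf Hg). intros; apply Rmult_comm. Qed.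

Lemma is_derive_Rext (f g : R -> R) (t l : R) :
  (forall s, f s = g s) -> is_derive f t l -> is_derive g t l.
Proof. intros Hfg Hf. exact (is_derive_ext f g t l Hfg Hf). Qed.

Lemma derive_zero_const (g : R -> R) (x : R) :
  (forall y, Rabs y <= Rabs x -> is_derive g y 0) -> g x = g 0.
Proof.
  intros Hg.
  destruct (MVT_cor4 g (fun _ => 0) 0 (Rabs x)) with (b := x) as [c [Hc _]];
    rewrite ?Rminus_0_r in *; [intros c Hc; apply Hg; now rewrite Rminus_0_r in Hc | lra |].
  lra.
Qed.

Lemma pseries_on_unique (r : R) (u : nat -> R) (f g : R -> R) (x : R) :
  pseries_on r u f -> pseries_on r u g -> Rabs x < r -> f x = g x.
Proof.
  intros Hf Hg Hx. rewrite <- (is_pseries_unique u x (f x)), <- (is_pseries_unique u x (g x));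
    [reflexivity | apply Hg, Hx | apply Hf, Hx].
Qed.

Lemma pseries_on_PSeries (r : R) (u : nat -> R) :
  (forall x, Rabs x < r -> Rbar_lt (Rabs x) (CV_radius u)) -> pseries_on r u (PSeries u).
Proof. intros Hrad x Hx. apply PSeries_correct, CV_radius_inside, Hrad, Hx. Qed.

Lemma disk9_pos (x : R) : Rabs x < 1 / 9 -> 0 < 1 + 9 * x.
Proof. intros Hx. apply Rabs_def2 in Hx. lra. Qed.

Definition geo9 (n : nat) : R := (-9) ^ n.

Lemma geo9_pseries : pseries_on (1 / 9) geo9 (fun x => / (1 + 9 * x)).
Proof.
  intros x Hx. apply is_pseries_Rmult.
  replace (1 + 9 * x) with (1 - (-9 * x)) by ring.
  apply (is_series_ext (fun n => (-9 * x) ^ n)); [intros n; apply Rpow_mult_distr|].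
  apply is_series_geom. rewrite Rabs_mult, Rabs_left by lra. lra.
Qed.

Definition log9 : nat -> R := PS_Int (fun n => 9 * geo9 n).

Lemma log9_pseries : pseries_on (1 / 9) log9 (fun x => ln (1 + 9 * x)).
Proof.
  assert (Hgeo := pseries_on_scal _ 9 _ _ geo9_pseries).
  assert (Hrad : forall x, Rabs x < 1 / 9 -> Rbar_lt (Rabs x) (CV_radius log9))
    by (intros x Hx; unfold log9; rewrite CV_radius_Int; exact (pseries_on_radius _ _ _ Hgeo x Hx)).
  apply (pseries_on_ext _ log9 log9 (PSeries log9)); [reflexivity | | now apply pseries_on_PSeries].
  intros x Hx. apply Rminus_diag_uniq.
  rewrite (derive_zero_const (fun y => PSeries log9 y - ln (1 + 9 * y)) x).
  { rewrite PSeries_0, Rmult_0_r, Rplus_0_r, ln_1. unfold log9, PS_Int. ring. }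
  intros y Hy. assert (Hy' : Rabs y < 1 / 9) by lra. pose proof (disk9_pos y Hy') as Hpos.
  replace 0 with (PSeries (PS_derive log9) y - 9 / (1 + 9 * y)).
  - apply (is_derive_minus (PSeries log9) (fun y => ln (1 + 9 * y))).
    + apply is_derive_PSeries, Hrad, Hy'.
    + auto_derive; [lra | field; lra].
  - rewrite (PSeries_ext _ (fun n => 9 * geo9 n)) by (intros n; unfold log9, PS_derive, PS_Int;
      field; rewrite S_INR; pose proof (pos_INR n); lra).
    rewrite (is_pseries_unique _ _ _ (Hgeo y Hy')). field. lra.
Qed.

(* The binomial series of (1 + 9x)^(-1/2), defined through the ratio of consecutive
   coefficients. *)
Fixpoint isqrt9 (n : nat) : R :=
  match n with
  | O => 1
  | S k => - (9 * (2 * INR k + 1)) / (2 * INR k + 2) * isqrt9 k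
  end.

(* Each ratio of consecutive coefficients is at most 9 in absolute value. *)
Lemma isqrt9_bound (n : nat) : Rabs (isqrt9 n) <= 9 ^ n.
Proof.
  induction n as [|n IH]; [simpl; rewrite Rabs_R1; lra|].
  cbn [isqrt9 pow]. rewrite Rabs_mult.
  pose proof (pos_INR n) as Hn. pose proof (Rabs_pos (isqrt9 n)) as Hpos.
  assert (Hratio : Rabs (- (9 * (2 * INR n + 1)) / (2 * INR n + 2)) <= 9).
  { unfold Rdiv. rewrite Rabs_mult, Rabs_Ropp, Rabs_inv, !Rabs_right by lra.
    apply Rmult_le_reg_r with (2 * INR n + 2); [lra|].
    rewrite Rmult_assoc, Rinv_l by lra. lra. }
  apply Rmult_le_compat; auto using Rabs_pos.
Qed.

(* Coefficient form of the differential equation (1 + 9x) f' = -(9/2) f. *)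
Lemma isqrt9_ode_coeffs (n : nat) :
  PS_derive isqrt9 n + 9 * PS_incr_1 (PS_derive isqrt9) n = - (9 / 2) * isqrt9 n.
Proof.
  rewrite PS_incr_1_R. unfold PS_derive. destruct n as [|k]; cbn [isqrt9].
  - simpl. field.
  - rewrite !S_INR. pose proof (pos_INR k). field. lra.
Qed.

Lemma isqrt9_radius (x : R) : Rabs x < 1 / 9 -> Rbar_lt (Rabs x) (CV_radius isqrt9).
Proof.
  apply (radius_of_bounded_terms _ (1 / 9) 1). intros n.
  rewrite Rabs_mult, <- RPow_abs, (Rabs_right (1 / 9)) by lra.
  apply Rle_trans with (9 ^ n * (1 / 9) ^ n).
  - apply Rmult_le_compat_r; [apply pow_le; lra | apply isqrt9_bound].
  - rewrite <- Rpow_mult_distr. replace (9 * (1 / 9)) with 1 by field. rewrite pow1. lra.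
Qed.

Lemma isqrt9_ode (y : R) : Rabs y < 1 / 9 ->
  (1 + 9 * y) * PSeries (PS_derive isqrt9) y = - (9 / 2) * PSeries isqrt9 y.
Proof.
  intros Hy.
  pose proof (pseries_on_PSeries _ _ isqrt9_radius) as HP.
  pose proof (pseries_on_deriv _ _ _ (PSeries (PS_derive isqrt9)) HP
    (fun x Hx => is_derive_PSeries _ _ (isqrt9_radius x Hx))) as HD.
  rewrite Rmult_plus_distr_r, Rmult_1_l, Rmult_assoc.
  apply (pseries_on_unique (1 / 9)
    (fun n => PS_derive isqrt9 n + 9 * PS_incr_1 (PS_derive isqrt9) n)
    (fun y => PSeries (PS_derive isqrt9) y + 9 * (y * PSeries (PS_derive isqrt9) y))
    (fun y => - (9 / 2) * PSeries isqrt9 y) y); [| |exact Hy].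
  - apply pseries_on_plus; [exact HD | apply pseries_on_scal, pseries_on_shift, HD].
  - apply (pseries_on_ext _ (fun n => - (9 / 2) * isqrt9 n) _
      (fun y => - (9 / 2) * PSeries isqrt9 y)); [| reflexivity | now apply pseries_on_scal].
    intros n. symmetry. apply isqrt9_ode_coeffs.
Qed.

(* The series sums to 1/sqrt(1 + 9x): f(x) * sqrt(1 + 9x) has zero derivative. *)
Lemma isqrt9_pseries : pseries_on (1 / 9) isqrt9 (fun x => / sqrt (1 + 9 * x)).
Proof.
  apply (pseries_on_ext _ isqrt9 isqrt9 (PSeries isqrt9));
    [reflexivity | | exact (pseries_on_PSeries _ _ isqrt9_radius)].
  intros x Hx. pose proof (disk9_pos x Hx) as Hpos. pose proof (sqrt_lt_R0 _ Hpos) as Hsqrt.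
  apply (Rmult_eq_reg_r (sqrt (1 + 9 * x))); [|lra]. rewrite Rinv_l by lra.
  rewrite (derive_zero_const (fun y => PSeries isqrt9 y * sqrt (1 + 9 * y)) x).
  { rewrite PSeries_0, Rmult_0_r, Rplus_0_r, sqrt_1. simpl. ring. }
  intros y Hy. assert (Hy' : Rabs y < 1 / 9) by lra. pose proof (disk9_pos y Hy') as Hposy.
  pose proof (sqrt_lt_R0 _ Hposy) as Hsqrty. pose proof (sqrt_sqrt _ (Rlt_le _ _ Hposy)) as Hsq.
  replace 0 with (PSeries (PS_derive isqrt9) y * sqrt (1 + 9 * y)
                  + PSeries isqrt9 y * (9 / (2 * sqrt (1 + 9 * y)))).
  - apply (is_derive_Rmult (PSeries isqrt9) (fun y => sqrt (1 + 9 * y)));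
      [apply is_derive_PSeries, isqrt9_radius, Hy' |].
    apply (is_derive_sqrt (fun y => 1 + 9 * y)); [auto_derive; [exact I | ring] | exact Hposy].
  - apply (Rmult_eq_reg_r (2 * sqrt (1 + 9 * y))); [|lra].
    field_simplify; [|lra]. rewrite <- Rsqr_pow2, Rsqr_sqrt by lra.
    pose proof (isqrt9_ode y Hy'). nra.
Qed.

Definition at_odd (u : nat -> R) (j : nat) : R := if Nat.even j then 0 else u (Nat.div2 j).
Definition at_even (u : nat -> R) (j : nat) : R := if Nat.even j then u (Nat.div2 j) else 0.

Lemma at_odd_even (u : nat -> R) (p : nat) : at_odd u (2 * p) = 0.
Proof. unfold at_odd. now rewrite Nat.even_even. Qed.
Lemma at_odd_odd (u : nat -> R) (p : nat) : at_odd u (S (2 * p)) = u p.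
Proof. unfold at_odd. now rewrite Nat.even_succ, Nat.odd_even, Nat.div2_succ_double. Qed.
Lemma at_even_even (u : nat -> R) (p : nat) : at_even u (2 * p) = u p.
Proof. unfold at_even. now rewrite Nat.even_even, Nat.div2_double. Qed.
Lemma at_even_odd (u : nat -> R) (p : nat) : at_even u (S (2 * p)) = 0.
Proof. unfold at_even. now rewrite Nat.even_succ, Nat.odd_even. Qed.

Lemma square_in_disk (r t : R) : Rabs t < r -> Rabs (t ^ 2) < r ^ 2.
Proof.
  intros Ht. rewrite <- RPow_abs. pose proof (Rabs_pos t). simpl. nra.
Qed.

Lemma is_pseries_zero (x : R) : is_pseries (fun _ => 0) x 0.
Proof.
  pose proof (PSeries_correct (fun _ => 0) x) as H.
  rewrite PSeries_const_0 in H. apply H, CV_radius_inside. now rewrite CV_radius_const_0.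
Qed.

Lemma pseries_on_at_odd (r r2 : R) (u : nat -> R) (f : R -> R) :
  r ^ 2 <= r2 -> pseries_on r2 u f -> pseries_on r (at_odd u) (fun t => t * f (t ^ 2)).
Proof.
  intros Hr Hu t Ht. pose proof (square_in_disk r t Ht) as Ht2.
  rewrite <- (Rplus_0_l (t * f (t ^ 2))). apply is_pseries_odd_even.
  - apply (is_pseries_ext (fun _ => 0));
      [intros n; now rewrite at_odd_even | apply is_pseries_zero].
  - apply (is_pseries_ext u); [intros n; now rewrite Nat.add_1_r, at_odd_odd |].
    apply Hu; lra.
Qed.

Lemma pseries_on_at_even (r r2 : R) (u : nat -> R) (f : R -> R) :
  r ^ 2 <= r2 -> pseries_on r2 u f -> pseries_on r (at_even u) (fun t => f (t ^ 2)).
Proof.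
  intros Hr Hu t Ht. pose proof (square_in_disk r t Ht) as Ht2.
  rewrite <- (Rplus_0_r (f (t ^ 2))), <- (Rmult_0_r t). apply is_pseries_odd_even.
  - apply (is_pseries_ext u); [intros n; now rewrite at_even_even | apply Hu; lra].
  - apply (is_pseries_ext (fun _ => 0)); [intros n; now rewrite Nat.add_1_r, at_even_odd |].
    apply is_pseries_zero.
Qed.

(* The coefficients a_m, b_m, c_n, d_n of the theorem, as Taylor coefficients in x = tau^2 of
   explicit functions built from (1+9x)^(-1/2), (1+9x)^(-1) and ln(1+9x). *)
Definition coef_a : nat -> R := isqrt9.
Definition coef_c : nat -> R := PS_incr_1 (fun n => - (3 / 2) * geo9 n).
Definition coef_sw : nat -> R := PS_mult isqrt9 geo9.
Definition coef_b (n : nat) : R :=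
  / 24 * (33 * PS_mult log9 coef_sw n + (-45) * PS_incr_1 coef_sw n).
Definition coef_ww : nat -> R := PS_mult geo9 geo9.
Definition coef_d : nat -> R :=
  PS_incr_1 (fun n =>
    / 8 * (14 * coef_ww n + 36 * PS_incr_1 coef_ww n + (-33) * PS_mult log9 coef_ww n)).

Definition b_gen (x : R) : R :=
  (33 * ln (1 + 9 * x) - 45 * x) * (/ sqrt (1 + 9 * x) * / (1 + 9 * x)) / 24.
Definition d_gen (x : R) : R :=
  x * (14 + 36 * x - 33 * ln (1 + 9 * x)) * (/ (1 + 9 * x) * / (1 + 9 * x)) / 8.

Lemma coef_c_pseries : pseries_on (1 / 9) coef_c (fun x => - (3 / 2) * x * / (1 + 9 * x)).
Proof.
  apply (pseries_on_ext _ coef_c _ (fun x => x * (- (3 / 2) * / (1 + 9 * x))));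
    [reflexivity | intros; ring | apply pseries_on_shift, pseries_on_scal, geo9_pseries].
Qed.

Lemma coef_b_pseries : pseries_on (1 / 9) coef_b b_gen.
Proof.
  pose proof (pseries_on_mult _ _ _ _ _ isqrt9_pseries geo9_pseries) as Hsw.
  apply (pseries_on_ext _ coef_b _
    (fun x => / 24 * (33 * (ln (1 + 9 * x) * (/ sqrt (1 + 9 * x) * / (1 + 9 * x)))
                     + (-45) * (x * (/ sqrt (1 + 9 * x) * / (1 + 9 * x))))));
    [reflexivity | intros x _; unfold b_gen, Rdiv; ring |].
  apply pseries_on_scal, pseries_on_plus; apply pseries_on_scal;
    [exact (pseries_on_mult _ _ _ _ _ log9_pseries Hsw) | exact (pseries_on_shift _ _ _ Hsw)].
Qed.

Lemma coef_d_pseries : pseries_on (1 / 9) coef_d d_gen.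
Proof.
  pose proof (pseries_on_mult _ _ _ _ _ geo9_pseries geo9_pseries) as Hww.
  apply (pseries_on_ext _ coef_d _ (fun x => x * (/ 8 * (14 * (/ (1 + 9 * x) * / (1 + 9 * x))
      + 36 * (x * (/ (1 + 9 * x) * / (1 + 9 * x)))
      + (-33) * (ln (1 + 9 * x) * (/ (1 + 9 * x) * / (1 + 9 * x)))))));
    [reflexivity | intros x _; unfold d_gen, Rdiv; ring |].
  apply pseries_on_shift, pseries_on_scal, pseries_on_plus; [apply pseries_on_plus|];
    apply pseries_on_scal; [exact Hww | exact (pseries_on_shift _ _ _ Hww) |
                            exact (pseries_on_mult _ _ _ _ _ log9_pseries Hww)].
Qed.

Definition s3 (t : R) : R := / sqrt (1 + 9 * t ^ 2).
Definition w3 (t : R) : R := / (1 + 9 * t ^ 2).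
Definition L3 (t : R) : R := ln (1 + 9 * t ^ 2).

Definition A_gen (t : R) : R := t * s3 t.
Definition B_gen (t : R) : R := t * (s3 t * w3 t) * (33 * L3 t - 45 * t ^ 2) / 24.
Definition C_gen (t : R) : R := - (3 / 2) * t ^ 2 * w3 t.
Definition D_gen (t : R) : R := t ^ 2 * (14 + 36 * t ^ 2 - 33 * L3 t) * (w3 t * w3 t) / 8.

(* Their derivatives, in the form produced by the product rule. *)
Definition dA_gen (t : R) : R := s3 t * w3 t.
Definition d2A_gen (t : R) : R := -27 * t * s3 t * (w3 t * w3 t).
Definition dC_gen (t : R) : R := -3 * t * (w3 t * w3 t).
Definition dB_gen (t : R) : R :=
  (dA_gen t * w3 t - 18 * t * A_gen t * (w3 t * w3 t)) * (33 * L3 t - 45 * t ^ 2) / 24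
  + A_gen t * w3 t * (33 * 18 * t * w3 t - 90 * t) / 24.

Lemma disk_pos (t : R) : 0 < 1 + 9 * t ^ 2.
Proof. pose proof (pow2_ge_0 t). lra. Qed.

Lemma s3_sq (t : R) : s3 t * s3 t = w3 t.
Proof.
  unfold s3, w3. rewrite <- Rinv_mult, sqrt_sqrt; [reflexivity | left; apply disk_pos].
Qed.

Lemma lead_gen_vanishes (t : R) :
  A_gen t - t * dA_gen t + 2 * C_gen t
  + 3 * (A_gen t * A_gen t + A_gen t * C_gen t + C_gen t * A_gen t) = 0.
Proof.
  replace (A_gen t * A_gen t) with (t ^ 2 * w3 t) by (unfold A_gen; rewrite <- s3_sq; ring).
  unfold A_gen, dA_gen, C_gen, w3. pose proof (disk_pos t). field. lra.
Qed.

Lemma next_gen_vanishes (t : R) :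
  B_gen t - t * dB_gen t + 2 * D_gen t
  + (A_gen t * A_gen t + A_gen t * C_gen t + C_gen t * A_gen t)
  + 3 * (A_gen t * B_gen t + B_gen t * A_gen t + A_gen t * D_gen t + D_gen t * A_gen t
         + B_gen t * C_gen t + C_gen t * B_gen t + C_gen t * C_gen t)
  - / 2 * (t ^ 2 * d2A_gen t) + C_gen t + t * dC_gen t = 0.
Proof.
  replace (A_gen t * A_gen t) with (t ^ 2 * w3 t) by (unfold A_gen; rewrite <- s3_sq; ring).
  replace (A_gen t * B_gen t) with (t ^ 2 * w3 t * w3 t * (33 * L3 t - 45 * t ^ 2) / 24)
    by (unfold A_gen, B_gen; rewrite <- s3_sq; unfold Rdiv; ring).
  replace (B_gen t * A_gen t) with (t ^ 2 * w3 t * w3 t * (33 * L3 t - 45 * t ^ 2) / 24)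
    by (unfold A_gen, B_gen; rewrite <- s3_sq; unfold Rdiv; ring).
  unfold B_gen, dB_gen, A_gen, dA_gen, d2A_gen, C_gen, dC_gen, D_gen, w3.
  pose proof (disk_pos t). field. lra.
Qed.

Lemma s3_deriv (t : R) : is_derive s3 t (-9 * t * s3 t * w3 t).
Proof.
  unfold s3, w3. pose proof (disk_pos t) as Hpos. pose proof (sqrt_lt_R0 _ Hpos) as Hsqrt.
  auto_derive; replace (t * (t * 1)) with (t ^ 2) by ring.
  - repeat split; lra.
  - rewrite sqrt_sqrt by lra. field. lra.
Qed.

Lemma w3_deriv (t : R) : is_derive w3 t (-18 * t * (w3 t * w3 t)).
Proof.
  unfold w3. pose proof (disk_pos t) as Hpos.
  auto_derive; replace (t * (t * 1)) with (t ^ 2) by ring; [lra | field; lra].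
Qed.

Lemma A_gen_deriv (t : R) : is_derive A_gen t (dA_gen t).
Proof.
  replace (dA_gen t) with (1 * s3 t + t * (-9 * t * s3 t * w3 t)).
  - apply is_derive_Rmult; [apply (is_derive_id t) | apply s3_deriv].
  - unfold dA_gen, w3. pose proof (disk_pos t). field. lra.
Qed.

Lemma dA_gen_deriv (t : R) : is_derive dA_gen t (d2A_gen t).
Proof.
  replace (d2A_gen t) with (-9 * t * s3 t * w3 t * w3 t + s3 t * (-18 * t * (w3 t * w3 t))).
  - apply is_derive_Rmult; [apply s3_deriv | apply w3_deriv].
  - unfold d2A_gen. ring.
Qed.

Lemma C_gen_deriv (t : R) : is_derive C_gen t (dC_gen t).
Proof.
  replace (dC_gen t)
    with (- (3 / 2) * (2 * t) * w3 t + - (3 / 2) * t ^ 2 * (-18 * t * (w3 t * w3 t))).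
  - apply (is_derive_Rmult (fun s => - (3 / 2) * s ^ 2));
      [auto_derive; [exact I | ring] | apply w3_deriv].
  - unfold dC_gen, w3. pose proof (disk_pos t). field. lra.
Qed.

Lemma B_gen_deriv (t : R) : is_derive B_gen t (dB_gen t).
Proof.
  apply (is_derive_Rext (fun s => A_gen s * w3 s * ((33 * L3 s - 45 * s ^ 2) / 24)));
    [intros s; unfold B_gen, A_gen, Rdiv; ring|].
  replace (dB_gen t) with ((dA_gen t * w3 t + A_gen t * (-18 * t * (w3 t * w3 t)))
      * ((33 * L3 t - 45 * t ^ 2) / 24) + A_gen t * w3 t * ((33 * 18 * t * w3 t - 90 * t) / 24))
    by (unfold dB_gen, Rdiv; ring).
  apply (is_derive_Rmult (fun s => A_gen s * w3 s) (fun s => (33 * L3 s - 45 * s ^ 2) / 24));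
    [apply is_derive_Rmult; [apply A_gen_deriv | apply w3_deriv] |].
  unfold L3, w3. pose proof (disk_pos t).
  auto_derive; replace (t * (t * 1)) with (t ^ 2) by ring; [lra | field; lra].
Qed.

Definition lead_odd : nat -> R := at_odd coef_a.
Definition next_odd : nat -> R := at_odd coef_b.
Definition lead_even : nat -> R := at_even coef_c.
Definition next_even : nat -> R := at_even coef_d.

Lemma third_squared_le : (1 / 3) ^ 2 <= 1 / 9.
Proof. lra. Qed.

Lemma lead_odd_pseries : pseries_on (1 / 3) lead_odd A_gen.
Proof. exact (pseries_on_at_odd _ _ _ _ third_squared_le isqrt9_pseries). Qed.

Lemma next_odd_pseries : pseries_on (1 / 3) next_odd B_gen.
Proof.
  apply (pseries_on_ext _ next_odd next_odd (fun t => t * b_gen (t ^ 2)));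
    [reflexivity | intros t _; unfold b_gen, B_gen, s3, w3, L3, Rdiv; ring |].
  exact (pseries_on_at_odd _ _ _ _ third_squared_le coef_b_pseries).
Qed.

Lemma lead_even_pseries : pseries_on (1 / 3) lead_even C_gen.
Proof. exact (pseries_on_at_even _ _ _ _ third_squared_le coef_c_pseries). Qed.

Lemma next_even_pseries : pseries_on (1 / 3) next_even D_gen.
Proof.
  apply (pseries_on_ext _ next_even next_even (fun t => d_gen (t ^ 2)));
    [reflexivity | intros t _; unfold d_gen, D_gen, w3, L3, Rdiv; ring |].
  exact (pseries_on_at_even _ _ _ _ third_squared_le coef_d_pseries).
Qed.

(* Assembles a series from sums, scalings and Cauchy products of series in the context; the
   hypotheses are tried first so that no goal is left with undetermined coefficients. *)
Ltac pseries_on_combine :=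
  repeat first
    [ assumption | apply pseries_on_plus | apply pseries_on_scal | apply pseries_on_mult ].

(* The leading-order coefficient identity: its generating function vanishes identically. *)
Lemma lead_identity_holds (M : nat) :
  (1 - INR M) * lead_odd M + 2 * lead_even M + 3 * conv0 lead_odd lead_even M = 0.
Proof.
  pose proof lead_odd_pseries as gA. pose proof lead_even_pseries as gC.
  pose proof (pseries_on_weight _ _ _ _ gA (fun t _ => A_gen_deriv t)) as gwA.
  revert M. apply (pseries_on_unique_zero (1 / 3)); [lra|].
  apply (pseries_on_ext _
    (fun M => lead_odd M + (-1) * (INR M * lead_odd M) + 2 * lead_even M
      + 3 * (PS_mult lead_odd lead_odd M + PS_mult lead_odd lead_even M
             + PS_mult lead_even lead_odd M))
    _
    (fun t => A_gen t + (-1) * (t * dA_gen t) + 2 * C_gen t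
      + 3 * (A_gen t * A_gen t + A_gen t * C_gen t + C_gen t * A_gen t)));
    [intros M; unfold conv0; ring | intros t _; rewrite <- (lead_gen_vanishes t); ring |].
  pseries_on_combine.
Qed.

Lemma next_identity_holds (M : nat) :
  (1 - INR M) * next_odd M + 2 * next_even M + conv0 lead_odd lead_even M
  + 3 * conv1 lead_odd next_odd lead_even next_even M
  - INR M * (INR M - 1) / 2 * lead_odd M + (INR M + 1) * lead_even M = 0.
Proof.
  pose proof lead_odd_pseries as gA. pose proof next_odd_pseries as gB.
  pose proof lead_even_pseries as gC. pose proof next_even_pseries as gD.
  pose proof (pseries_on_weight _ _ _ _ gB (fun t _ => B_gen_deriv t)) as gwB.
  pose proof (pseries_on_weight _ _ _ _ gC (fun t _ => C_gen_deriv t)) as gwC.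
  pose proof (pseries_on_weight2 _ _ _ _ _ gA (fun t _ => A_gen_deriv t)
    (fun t _ => dA_gen_deriv t)) as gw2A.
  revert M. apply (pseries_on_unique_zero (1 / 3)); [lra|].
  apply (pseries_on_ext _
    (fun M => next_odd M + (-1) * (INR M * next_odd M) + 2 * next_even M
      + (PS_mult lead_odd lead_odd M + PS_mult lead_odd lead_even M + PS_mult lead_even lead_odd M)
      + 3 * (PS_mult lead_odd next_odd M + PS_mult next_odd lead_odd M
             + PS_mult lead_odd next_even M + PS_mult next_even lead_odd M
             + PS_mult next_odd lead_even M + PS_mult lead_even next_odd M
             + PS_mult lead_even lead_even M)
      + (- / 2) * (INR M * (INR M - 1) * lead_odd M) + lead_even M + INR M * lead_even M)
    _
    (fun t => B_gen t + (-1) * (t * dB_gen t) + 2 * D_gen t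
      + (A_gen t * A_gen t + A_gen t * C_gen t + C_gen t * A_gen t)
      + 3 * (A_gen t * B_gen t + B_gen t * A_gen t + A_gen t * D_gen t + D_gen t * A_gen t
             + B_gen t * C_gen t + C_gen t * B_gen t + C_gen t * C_gen t)
      + (- / 2) * (t ^ 2 * d2A_gen t) + C_gen t + t * dC_gen t));
    [intros M; unfold conv0, conv1; field | intros t _; rewrite <- (next_gen_vanishes t); ring |].
  pseries_on_combine.
Qed.

Lemma coef_b_0 : coef_b 0 = 0.
Proof.
  unfold coef_b, PS_mult. rewrite PS_incr_1_R. cbn [sum_f_R0]. unfold log9, PS_Int. ring.
Qed.

Lemma RbarL_expansions (M : nat) : (1 <= M)%nat ->
  expansion_of lead_odd next_odd lead_even next_even M.
Proof.
  apply all_expansions.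
  - intros p. apply at_odd_even.
  - intros p. apply at_odd_even.
  - intros p. apply at_even_odd.
  - intros p. apply at_even_odd.
  - reflexivity.
  - reflexivity.
  - reflexivity.
  - exact coef_b_0.
  - exact lead_identity_holds.
  - exact next_identity_holds.
Qed.

Lemma Rpower_three_halves (x : R) : 0 < x -> Rpower x (3 / 2) = x * sqrt x.
Proof.
  intros Hx. replace (3 / 2) with (1 + / 2) by field.
  rewrite Rpower_plus, Rpower_1, Rpower_sqrt by exact Hx. reflexivity.
Qed.

Lemma series_b (tau : R) : Rabs tau < 1 / 3 ->
  is_series (fun m : nat => coef_b m * tau ^ (2 * m + 1))
    (- (tau * (45 * tau ^ 2 - 33 * ln (1 + 9 * tau ^ 2)))
       / (24 * Rpower (1 + 9 * tau ^ 2) (3 / 2))).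
Proof.
  intros Htau. pose proof (square_in_disk _ _ Htau) as Hsq.
  pose proof (proj1 (is_pseries_Rmult _ _ _) (coef_b_pseries (tau ^ 2) ltac:(lra))) as Hb.
  apply (is_series_scal tau) in Hb.
  eapply is_series_ext; [| replace (- _ / _) with (tau * b_gen (tau ^ 2)); [exact Hb |]].
  - intros m. rewrite pow_add, pow_mult. unfold scal; simpl; unfold mult; simpl. ring.
  - pose proof (disk_pos tau) as Hpos. pose proof (sqrt_lt_R0 _ Hpos) as Hsqrt.
    rewrite Rpower_three_halves by exact Hpos. unfold b_gen. field. lra.
Qed.

Lemma series_d (tau : R) : Rabs tau < 1 / 3 ->
  is_series (fun n : nat => coef_d (S n) * tau ^ (2 * S n))
    (tau ^ 2 * (14 + 36 * tau ^ 2 - 33 * ln (1 + 9 * tau ^ 2)) / (8 * (1 + 9 * tau ^ 2) ^ 2)).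
Proof.
  intros Htau. pose proof (square_in_disk _ _ Htau) as Hsq.
  pose proof (proj1 (is_pseries_Rmult _ _ _) (coef_d_pseries (tau ^ 2) ltac:(lra))) as Hd.
  apply (is_series_ext (fun n => coef_d (S n) * (tau ^ 2) ^ S n));
    [intros n; now rewrite pow_mult|].
  apply (is_series_incr_1 (fun n => coef_d n * (tau ^ 2) ^ n)).
  replace (coef_d 0%nat) with 0 by reflexivity.
  replace (plus _ _) with (d_gen (tau ^ 2)); [exact Hd|].
  unfold plus; simpl. pose proof (disk_pos tau). unfold d_gen. field. lra.
Qed.

Theorem mainTheorem3 :
  exists a b c d : nat -> R,
    (forall m : nat, expansion2 (RbarL (2 * m + 1)) (m + 1) (a m) (b m)) /\
    (forall n : nat, (1 <= n)%nat -> expansion2 (RbarL (2 * n)) (n + 1) (c n) (d n)) /\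
    (forall tau : R, Rabs tau < 1 / 3 ->
       is_series (fun m : nat => b m * tau ^ (2 * m + 1))
         (- (tau * (45 * tau ^ 2 - 33 * ln (1 + 9 * tau ^ 2)))
            / (24 * Rpower (1 + 9 * tau ^ 2) (3 / 2)))
       /\
       is_series (fun n : nat => d (S n) * tau ^ (2 * S n))
         (tau ^ 2 * (14 + 36 * tau ^ 2 - 33 * ln (1 + 9 * tau ^ 2))
            / (8 * (1 + 9 * tau ^ 2) ^ 2))).
Proof.
  exists coef_a, coef_b, coef_c, coef_d. split; [|split].
  - intros m. apply jet_expansion2. rewrite Nat.add_1_r.
    pose proof (RbarL_expansions (S (2 * m)) ltac:(lia)) as H.
    apply expansion_of_odd in H; [|apply at_even_odd | apply at_even_odd].
    unfold lead_odd, next_odd in H. now rewrite !at_odd_odd in H.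
  - intros n Hn. apply jet_expansion2.
    pose proof (RbarL_expansions (2 * n) ltac:(lia)) as H.
    apply expansion_of_even in H; [|apply at_odd_even | apply at_odd_even].
    unfold lead_even, next_even in H. now rewrite !at_even_even in H.
  - intros tau Htau. split; [apply series_b | apply series_d]; exact Htau.
Qed.
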